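(* Let $k$ be even and $d\ge1$. For any $k$-XOR instance $\Phi$ on $n$ variables consisting of $m\ge1$ constraints on distinct tuples, and any assignment $x\in\{\pm1\}^n$, $$\Big|\mathrm{sat}_\Phi(x)-\frac12\Big|\le\frac{1}{2m}\Big[\|R^{\Phi,d}_{\mathrm{norm}}\|\cdot\sum_{I\in[n]^{kd/2}}\mathrm{hist}(I)!\Big]^{1/d}.$$
   Context: A $k$-XOR instance $\Phi$ is a set of constraints $C_{S_1},\dots,C_{S_m}$ with distinct $S_a=(s_1,\dots,s_k)\in[n]^k$, where $C_S$ is $\prod_{i=1}^kx_{s_i}=\eta_S$ with $\eta_S\in\{\pm1\}$; $\mathrm{sat}_\Phi(x)$ is the fraction of constraints satisfied by $x$. Constraint tensor: $T_S=\eta_{S}$ if $S=S_a$ for some $a$, else $0$. $\|\cdot\|$ is the spectral norm. $M^\Phi$ is the $n^{k/2}\times n^{k/2}$ matrix indexed by $[n]^{k/2}$ with $M^\Phi_{U,V}=T_{(U,V)}$ (concatenation); $S^\Phi=\frac12(M^\Phi+(M^\Phi)^\top)$. $S^{\Phi,d}$ is indexed by $[n]^{kd/2}$, tuples written as concatenations $(U_1,\dots,U_d)$ of blocks in $[n]^{k/2}$, with $S^{\Phi,d}_{(U_1,\dots,U_d),(V_1,\dots,V_d)}=\prod_{s=1}^dS^\Phi_{U_s,V_s}$. For $I=(i_1,\dots,i_q)$ and $\pi\in\mathbb{S}_q$, $\pi(I)=(i_{\pi(1)},\dots,i_{\pi(q)})$; $R^{\Phi,d}_{I,J}=\frac{1}{((kd/2)!)^2}\sum_{\pi,\sigma\in\mathbb{S}_{kd/2}}S^{\Phi,d}_{\pi(I),\sigma(J)}$.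 $\mathrm{hist}(I)=(\alpha_1,\dots,\alpha_n)$ with $\alpha_i$ the number of occurrences of $i$ in $I$, $\mathrm{hist}(I)!=\prod_i\alpha_i!$. $D_{\mathrm{hist}}$ is diagonal with $(I,I)$ entry $\sqrt{\mathrm{hist}(I)!}$, and $R^{\Phi,d}_{\mathrm{norm}}=D_{\mathrm{hist}}^{-1}R^{\Phi,d}D_{\mathrm{hist}}^{-1}$. *)

From HB Require Import structures.
From mathcomp Require Import all_boot all_order all_algebra all_fingroup.
From mathcomp Require Import all_classical all_reals all_analysis.
Set Implicit Arguments. Unset Strict Implicit. Unset Printing Implicit Defensive.
Import Order.TTheory GRing.Theory Num.Theory.
Local Open Scope classical_set_scope.
Local Open Scope ring_scope.

Section KXOR.
Variables (R : realType) (n m k : nat).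
(* A k-XOR instance: constraint tuples S a (distinct, imposed in the theorem)
   with right-hand sides eta a in {+1,-1}. *)
Variables (S : 'I_m -> k.-tuple 'I_n) (eta : 'I_m -> R).

Definition sat (x : 'I_n -> R) : R :=
  (#|[set a : 'I_m | \prod_(i < k) x (tnth (S a) i) == eta a]|)%:R / m%:R.

(* constraint tensor T_s = eta_a if s = S_a, else 0 (tuples are distinct) *)
Definition ctensor (s : seq 'I_n) : R := \sum_(a < m | val (S a) == s) eta a.

Definition Mphi (U V : seq 'I_n) : R := ctensor (U ++ V).

Definition Sphi (U V : seq 'I_n) : R := 2^-1 * (Mphi U V + Mphi V U).

Definition block (h s : nat) (I : seq 'I_n) : seq 'I_n := take h (drop (s * h) I).

Definition Sphid (d : nat) (I J : seq 'I_n) : R :=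
  \prod_(s < d) Sphi (block k./2 s I) (block k./2 s J).

Definition tperm (q : nat) (pi : 'S_q) (I : q.-tuple 'I_n) : q.-tuple 'I_n :=
  [tuple tnth I (pi j) | j < q].

Definition Rphid (d : nat) (I J : ((k./2) * d).-tuple 'I_n) : R :=
  (((k./2 * d)`!)%:R ^+ 2)^-1 *
  \sum_(pi : 'S_(k./2 * d)) \sum_(sg : 'S_(k./2 * d))
     Sphid d (tperm pi I) (tperm sg J).

Definition histfact (I : seq 'I_n) : nat := \prod_(i : 'I_n) (count_mem i I)`!.

Definition Rnorm (d : nat) (I J : ((k./2) * d).-tuple 'I_n) : R :=
  Rphid I J / (Num.sqrt (histfact I)%:R * Num.sqrt (histfact J)%:R).
End KXOR.

Definition specnorm (R : realType) (T : finType) (A : T -> T -> R) : R :=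
  sup [set y : R | exists v : T -> R,
         \sum_(i : T) v i ^+ 2 = 1 /\
         y = Num.sqrt (\sum_(i : T) (\sum_(j : T) A i j * v j) ^+ 2)].

From Pilot Require Import Defs.
From HB Require Import structures.
From mathcomp Require Import all_boot all_order all_algebra all_fingroup.
From mathcomp Require Import all_classical all_reals all_analysis.
From mathcomp Require Import ring lra.
Set Implicit Arguments. Unset Strict Implicit. Unset Printing Implicit Defensive.
Import Order.TTheory GRing.Theory Num.Theory.
Local Open Scope ring_scope.

(* Write P(x) = sum_a eta_a x^(S_a) for the signed agreement of x with the
   constraints, where x^I = prod_(i in I) x_i; then sat(x) - 1/2 = P(x)/(2m)
   (sat_bias).  For a matrix A write q_A(y) = sum_(I,J) y_I y_J A_(I,J).
   Evaluated on the monomial vector I |-> x^I: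
   - q_(M^Phi) = P(x), and since only the symmetric part of a matrix
     contributes, also q_(S^Phi) = P(x)                (qform_Mphi, qform_Sphi);
   - S^(Phi,d) is a blockwise d-fold tensor power of S^Phi, so
     q_(S^(Phi,d)) = P(x)^d                            (qform_Sphid);
   - x^I is invariant under permuting I, so averaging over permutations
     gives q_(R^(Phi,d)) = P(x)^d                      (qform_perm_avg).
   With w_I = sqrt(hist(I)!) x^I this reads q_(R_norm)(w) = P(x)^d, while
   |w|^2 = sum_I hist(I)! because (x^I)^2 = 1.  The spectral bound
   |q_A(w)| <= ||A|| |w|^2, a consequence of Cauchy-Schwarz, then gives
   |P(x)|^d <= ||R_norm|| sum_I hist(I)!, and we take d-th roots.  The
   argument does not need the constraint tuples to be distinct. *)

Section TupleSums.
Variable T : finType.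

Lemma sum_tuple_cat (V : nmodType) (L1 L2 : nat) (f : seq T -> V) :
  \sum_(I : (L1 + L2).-tuple T) f I =
  \sum_(U : L1.-tuple T) \sum_(W : L2.-tuple T) f (U ++ W).
Proof.
rewrite pair_big /=.
rewrite (reindex (fun p : L1.-tuple T * L2.-tuple T => cat_tuple p.1 p.2)) //=.
have size_left (I : (L1 + L2).-tuple T) : size (take L1 I) == L1.
  by rewrite size_takel ?size_tuple ?leq_addr.
have size_right (I : (L1 + L2).-tuple T) : size (drop L1 I) == L2.
  by rewrite size_drop size_tuple addKn.
exists (fun I => (Tuple (size_left I), Tuple (size_right I))).
  move=> [U W] _; congr pair; apply: val_inj => /=.
    by rewrite take_size_cat ?size_tuple.
  by rewrite drop_size_cat ?size_tuple.
by move=> I _; apply: val_inj; rewrite /= cat_take_drop.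
Qed.

End TupleSums.

Section Blocks.
Variable n : nat.
Implicit Types (h d : nat) (U W I : seq 'I_n).

Lemma block0 h U W : size U = h -> block h 0 (U ++ W) = U.
Proof. by move=> sU; rewrite /block mul0n drop0 take_size_cat. Qed.

Lemma blockS h s U W : size U = h -> block h s.+1 (U ++ W) = block h s W.
Proof.
by move=> sU; rewrite /block mulSn addnC -drop_drop (drop_size_cat _ sU).
Qed.

Lemma sum_prod_blocks (V : comNzRingType) h d (G : nat -> seq 'I_n -> V) :
  \sum_(I : (h * d).-tuple 'I_n) \prod_(s < d) G s (block h s I) =
  \prod_(s < d) \sum_(U : h.-tuple 'I_n) G s U.
Proof.
elim: d G => [|d IH] G.
  rewrite big_ord0; under eq_bigr do rewrite big_ord0.
  by rewrite sumr_const card_tuple muln0 expn0.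
rewrite mulnS.
rewrite (sum_tuple_cat h (h * d) (fun I => \prod_(s < d.+1) G s (block h s I))).
rewrite big_ord_recl -(IH (fun s => G s.+1)) mulr_suml.
apply: eq_bigr => U _; rewrite mulr_sumr; apply: eq_bigr => W _.
rewrite big_ord_recl block0 ?size_tuple //; congr (_ * _).
by apply: eq_bigr => s _; rewrite lift0 blockS ?size_tuple.
Qed.

Lemma prod_blocks (V : comNzRingType) h d (x : 'I_n -> V) I :
  size I = (h * d)%N ->
  \prod_(i <- I) x i = \prod_(s < d) \prod_(i <- block h s I) x i.
Proof.
elim: d I => [|d IH] I sI.
  by move: sI; rewrite muln0 => /size0nil ->; rewrite big_nil big_ord0.
have size_head : size (take h I) = h by rewrite size_takel // sI leq_pmulr.
rewrite -(cat_take_drop h I) big_cat big_ord_recl block0 //.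
rewrite (IH (drop h I)); last by rewrite size_drop sI mulnS addKn.
by congr (_ * _); apply: eq_bigr => s _; rewrite lift0 blockS.
Qed.

End Blocks.

Section QuadraticForms.
Variables (R : numFieldType) (T : finType).
Implicit Types (y : T -> R) (A : T -> T -> R).

Definition qform y A : R := \sum_i \sum_j y i * y j * A i j.

Lemma qform_sym y A : qform y (fun i j => 2^-1 * (A i j + A j i)) = qform y A.
Proof.
rewrite /qform.
under eq_bigr do under eq_bigr do rewrite mulrDr mulrDr.
under eq_bigr do rewrite big_split /=.
rewrite big_split /= [X in _ + X]exchange_big /=.
under [X in _ + X]eq_bigr do under eq_bigr do rewrite [y _ * y _]mulrC.
rewrite -big_split /=; apply: eq_bigr => i _; rewrite -big_split /=.
by apply: eq_bigr => j _; rewrite -mulrDr -mulrDl -mulr2n -mulr_natr; field.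
Qed.

Lemma qformZ y c A : qform y (fun i j => c * A i j) = c * qform y A.
Proof.
rewrite /qform mulr_sumr; apply: eq_bigr => i _; rewrite mulr_sumr.
by apply: eq_bigr => j _; rewrite mulrCA.
Qed.

Lemma qform_sum (P : finType) y (B : P -> T -> T -> R) :
  qform y (fun i j => \sum_p B p i j) = \sum_p qform y (B p).
Proof.
rewrite /qform [RHS]exchange_big /=; apply: eq_bigr => i _.
rewrite [RHS]exchange_big /=; apply: eq_bigr => j _.
by rewrite mulr_sumr.
Qed.

Lemma qform_reindex y A (f g : T -> T) :
  injective f -> injective g -> (forall i, y (f i) = y i) ->
  (forall i, y (g i) = y i) ->
  qform y (fun i j => A (f i) (g j)) = qform y A.
Proof.
move=> f_inj g_inj yf yg; rewrite /qform [RHS](reindex_inj f_inj).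
apply: eq_bigr => i _; rewrite [RHS](reindex_inj g_inj).
by apply: eq_bigr => j _; rewrite yf yg.
Qed.

Lemma qform_diag_scale y A (D : T -> R) : (forall i, D i != 0) ->
  qform (fun i => D i * y i) (fun i j => A i j / (D i * D j)) = qform y A.
Proof.
move=> D_neq0; apply: eq_bigr => i _; apply: eq_bigr => j _.
by field; rewrite !D_neq0.
Qed.

End QuadraticForms.

Lemma sum_sqr_eq0 (R : realDomainType) (T : finType) (a : T -> R) :
  \sum_i a i ^+ 2 = 0 -> forall i, a i = 0.
Proof.
move=> a0 i; apply/eqP; rewrite -sqrf_eq0; apply/eqP.
by apply: (psumr_eq0P _ a0) => // j _; apply: sqr_ge0.
Qed.

(* Cauchy-Schwarz for finite sums, proved via the nonnegative sum of
   squares sum_i (B a_i - C b_i)^2 = B (A B - C^2). *)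
Lemma cauchy_schwarz (R : realFieldType) (T : finType) (a b : T -> R) :
  (\sum_i a i * b i) ^+ 2 <= (\sum_i a i ^+ 2) * (\sum_i b i ^+ 2).
Proof.
set A := \sum_i a i ^+ 2; set B := \sum_i b i ^+ 2; set C := \sum_i a i * b i.
have B_ge0 : 0 <= B by apply: sumr_ge0 => i _; apply: sqr_ge0.
have [B0 | B_gt0] := eqVneq B 0.
  have b0 := sum_sqr_eq0 B0.
  rewrite /C big1 ?B0 ?expr0n ?mulr0 // => i _; by rewrite b0 mulr0.
have discr : B * (A * B - C ^+ 2) = \sum_i (B * a i - C * b i) ^+ 2.
  rewrite (eq_bigr (fun i => B ^+ 2 * a i ^+ 2 - (2 * B * C) * (a i * b i)
     + C ^+ 2 * b i ^+ 2)); last by move=> i _; ring.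
  by rewrite big_split sumrB /= -!mulr_sumr -/A -/B -/C; ring.
have : 0 <= B * (A * B - C ^+ 2).
  by rewrite discr; apply: sumr_ge0 => i _; apply: sqr_ge0.
by rewrite pmulr_rge0 ?lt_def ?B_gt0 // subr_ge0.
Qed.

Lemma cauchy_schwarz_norm (R : rcfType) (T : finType) (a b : T -> R) :
  `|\sum_i a i * b i|
    <= Num.sqrt (\sum_i a i ^+ 2) * Num.sqrt (\sum_i b i ^+ 2).
Proof.
have sum_sqr_ge0 (c : T -> R) : 0 <= \sum_i c i ^+ 2.
  by apply: sumr_ge0 => i _; apply: sqr_ge0.
rewrite -sqrtrM // -sqrtr_sqr ler_sqrt ?mulr_ge0 //; exact: cauchy_schwarz.
Qed.

Section SpectralNorm.
Variables (R : realType) (T : finType) (A : T -> T -> R).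

Lemma specnorm_ge (v : T -> R) : \sum_i v i ^+ 2 = 1 ->
  Num.sqrt (\sum_i (\sum_j A i j * v j) ^+ 2) <= specnorm A.
Proof.
move=> v1; apply: sup_upper_bound; last by exists v.
split; first by exists (Num.sqrt (\sum_i (\sum_j A i j * v j) ^+ 2)), v.
exists (Num.sqrt (\sum_i \sum_j A i j ^+ 2)) => _ [u [u1 ->]].
rewrite ler_sqrt; last by do 2!apply: sumr_ge0 => ? _; apply: sqr_ge0.
by apply: ler_sum => i _; rewrite -[X in _ <= X]mulr1 -u1 cauchy_schwarz.
Qed.

(* The quadratic form of A is bounded by its spectral norm: writing w = N v
   with v a unit vector, Cauchy-Schwarz gives |q_A(w)| = |<w, Aw>|
   <= |w| |Aw| = N^2 |Av|. *)
Lemma qform_le_specnorm (w : T -> R) :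
  `|qform w A| <= specnorm A * \sum_i w i ^+ 2.
Proof.
set N2 := \sum_i w i ^+ 2.
have [N2_0 | N2_neq0] := eqVneq N2 0.
  rewrite N2_0 mulr0 /qform big1 ?normr0 // => i _.
  by rewrite big1 // => j _; rewrite (sum_sqr_eq0 N2_0) !mul0r.
have N2_gt0 : 0 < N2.
  by rewrite lt_def N2_neq0 sumr_ge0 // => i _; apply: sqr_ge0.
set N := Num.sqrt N2.
have N_gt0 : 0 < N by rewrite sqrtr_gt0.
set v := fun i => w i / N.
set Av := fun i => \sum_j A i j * v j.
have qformE : qform w A = \sum_i w i * (N * Av i).
  apply: eq_bigr => i _; rewrite mulr_sumr mulr_sumr; apply: eq_bigr => j _.
  by rewrite /v; field; rewrite gt_eqF.
have v1 : \sum_i v i ^+ 2 = 1.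
  under eq_bigr do rewrite expr_div_n.
  by rewrite -mulr_suml (sqr_sqrtr (ltW N2_gt0)) divff.
have : `|qform w A| <= N * Num.sqrt (\sum_i (N * Av i) ^+ 2).
  by rewrite qformE; apply: cauchy_schwarz_norm.
have -> : \sum_i (N * Av i) ^+ 2 = N ^+ 2 * \sum_i Av i ^+ 2.
  by rewrite mulr_sumr; apply: eq_bigr => i _; rewrite exprMn.
rewrite sqrtrM ?sqr_ge0 // sqrtr_sqr (ger0_norm (ltW N_gt0)) => q_le.
apply: le_trans q_le _.
rewrite mulrA -expr2 (sqr_sqrtr (ltW N2_gt0)) [specnorm A * _]mulrC.
by rewrite ler_pM2l // specnorm_ge.
Qed.

End SpectralNorm.

Definition monomial (R : comNzRingType) (T : Type) (x : T -> R) (I : seq T)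
  : R :=
  \prod_(i <- I) x i.

Lemma qform_tensor (R : numFieldType) (n h d : nat) (x : 'I_n -> R)
    (F : seq 'I_n -> seq 'I_n -> R) :
  qform (fun I : (h * d).-tuple 'I_n => monomial x I)
        (fun I J => \prod_(s < d) F (block h s I) (block h s J))
  = qform (fun U : h.-tuple 'I_n => monomial x U) (fun U V => F U V) ^+ d.
Proof.
pose G (U V : seq 'I_n) := monomial x U * monomial x V * F U V.
have blockwise (I J : (h * d).-tuple 'I_n) :
    monomial x I * monomial x J * \prod_(s < d) F (block h s I) (block h s J)
    = \prod_(s < d) G (block h s I) (block h s J).
  rewrite /monomial (prod_blocks x (size_tuple I)).
  by rewrite (prod_blocks x (size_tuple J)) -!big_split.
rewrite /qform.
under eq_bigr => I _.
  under eq_bigr do rewrite blockwise.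
  rewrite (sum_prod_blocks h d (fun s V => G (block h s I) V)).
  over.
rewrite (sum_prod_blocks h d (fun _ U => \sum_(V : h.-tuple 'I_n) G U V)).
by rewrite prodr_const card_ord.
Qed.

Lemma prod_sign (R : numDomainType) (I : Type) (r : seq I) (F : I -> R) :
  (forall i, F i = 1 \/ F i = -1) ->
  \prod_(i <- r) F i = 1 \/ \prod_(i <- r) F i = -1.
Proof.
move=> F_sign; apply: (big_ind (fun v : R => v = 1 \/ v = -1)); first by left.
  move=> a b [->|->] [->|->]; rewrite ?mulr1 ?mul1r ?mulN1r ?opprK;
    by [left | right].
by move=> i _; apply: F_sign.
Qed.

Lemma sign_eq_indicator (R : realFieldType) (e p : R) :
  e = 1 \/ e = -1 -> p = 1 \/ p = -1 -> (p == e)%:R = 2^-1 * (1 + e * p).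
Proof.
have one_neqN1 : ((1 : R) == -1) = false by apply/eqP => h; lra.
have N1_neq1 : ((-1 : R) == 1) = false by apply/eqP => h; lra.
by move=> [->|->] [->|->]; rewrite ?eqxx ?one_neqN1 ?N1_neq1 /=; lra.
Qed.

Lemma le_powR_inv (R : realType) (d : nat) (a b : R) :
  (0 < d)%N -> 0 <= a -> a ^+ d <= b -> a <= b `^ d%:R^-1.
Proof.
move=> d_gt0 a_ge0 ad_le_b.
have d_neq0 : (d%:R : R) != 0 by rewrite pnatr_eq0 -lt0n.
have ad_ge0 : 0 <= a ^+ d by rewrite exprn_ge0.
have -> : a = (a ^+ d) `^ d%:R^-1.
  by rewrite -powR_mulrn // -powRrM mulfV // powRr1.
by apply: ge0_ler_powR; rewrite // nnegrE (le_trans ad_ge0 ad_le_b).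
Qed.

Lemma tperm_inj (n L : nat) (p : 'S_L) : injective (@Defs.tperm n L p).
Proof.
move=> I J eqIJ; apply: eq_from_tnth => j.
have := congr1 (fun t => tnth t ((p^-1)%g j)) eqIJ.
by rewrite !tnth_mktuple permKV.
Qed.

Section XorInstance.
Variables (R : realType) (n m k : nat).
Variables (S : 'I_m -> k.-tuple 'I_n) (eta : 'I_m -> R) (x : 'I_n -> R).
Hypothesis eta_sign : forall a, eta a = 1 \/ eta a = -1.
Hypothesis x_sign : forall i, x i = 1 \/ x i = -1.

Definition agreement : R := \sum_a eta a * \prod_(i < k) x (tnth (S a) i).

Lemma sat_bias : (0 < m)%N -> sat S eta x - 2^-1 = (2 * m%:R)^-1 * agreement.
Proof.
move=> m_gt0; have m_neq0 : (m%:R : R) != 0 by rewrite pnatr_eq0 -lt0n.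
rewrite /sat; set satisfied := #|_|.
have -> : (satisfied%:R : R)
    = \sum_a 2^-1 * (1 + eta a * \prod_(i < k) x (tnth (S a) i)).
  rewrite -sumr_const big_mkcond /=; apply: eq_bigr => a _.
  rewrite unfold_in /in_set /= asboolb -sign_eq_indicator //.
    by case: (_ == _).
  by apply: prod_sign => i; apply: x_sign.
rewrite -mulr_sumr big_split /= sumr_const card_ord.
by rewrite /agreement; field.
Qed.

(* The monomial of a sign vector is a sign, so it squares to 1. *)
Lemma monomial_sqr (I : seq 'I_n) : monomial x I ^+ 2 = 1.
Proof.
rewrite /monomial; have [->|->] := prod_sign I x_sign;
  by rewrite ?expr1n ?sqrrN ?expr1n.
Qed.

Lemma qform_Mphi (h : nat) : k = (h + h)%N ->
  qform (fun U : h.-tuple 'I_n => monomial x U) (fun U V => Mphi S eta U V)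
  = agreement.
Proof.
move=> k_hh; rewrite /qform /agreement.
have cat_form (U V : h.-tuple 'I_n) :
    monomial x U * monomial x V * Mphi S eta U V
    = \sum_(a | val (S a) == U ++ V) eta a * monomial x (U ++ V).
  rewrite /Mphi /ctensor mulr_sumr /monomial big_cat /=.
  by apply: eq_bigr => a _; rewrite mulrC.
under eq_bigr do under eq_bigr do rewrite cat_form.
rewrite -(sum_tuple_cat h h
  (fun W => \sum_(a | val (S a) == W) eta a * monomial x W)).
rewrite -k_hh; under eq_bigr do rewrite big_mkcond /=.
rewrite exchange_big /=; apply: eq_bigr => a _.
rewrite -big_mkcond (big_pred1 (S a)) => [|W]; last by rewrite eq_sym.
by rewrite /monomial big_tuple.
Qed.

Lemma qform_Sphi (h : nat) : k = (h + h)%N ->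
  qform (fun U : h.-tuple 'I_n => monomial x U) (fun U V => Sphi S eta U V)
  = agreement.
Proof.
move=> k_hh; rewrite -(qform_Mphi k_hh).
exact: (qform_sym _ (fun U V : h.-tuple 'I_n => Mphi S eta U V)).
Qed.

(* S^(Phi,d) is a d-fold tensor power of S^Phi, so
   q_(S^(Phi,d))(x^.) = P(x)^d. *)
Lemma qform_Sphid (d : nat) : k = (k./2 + k./2)%N ->
  qform (fun I : (k./2 * d).-tuple 'I_n => monomial x I)
        (fun I J => Sphid S eta d I J)
  = agreement ^+ d.
Proof.
move=> k_half; rewrite -(qform_Sphi k_half).
exact: (@qform_tensor R n k./2 d x (fun U V => Sphi S eta U V)).
Qed.

Lemma monomial_tperm (L : nat) (p : 'S_L) (I : L.-tuple 'I_n) :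
  monomial x (Defs.tperm p I) = monomial x I.
Proof.
rewrite /monomial !big_tuple; under eq_bigr do rewrite tnth_mktuple.
by rewrite [RHS](reindex_inj (@perm_inj _ p)).
Qed.

(* Averaging a matrix over all row and column permutations of the index
   tuples leaves its form on the (permutation-invariant) monomial vector
   unchanged. *)
Lemma qform_perm_avg (L : nat) (A : L.-tuple 'I_n -> L.-tuple 'I_n -> R) :
  qform (fun I : L.-tuple 'I_n => monomial x I)
    (fun I J => ((L`!)%:R ^+ 2)^-1 * \sum_(pi : 'S_L) \sum_(sg : 'S_L)
                  A (Defs.tperm pi I) (Defs.tperm sg J))
  = qform (fun I : L.-tuple 'I_n => monomial x I) A.
Proof.
rewrite qformZ qform_sum; under eq_bigr do rewrite qform_sum.
under eq_bigr do under eq_bigr do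
  rewrite (qform_reindex A (@tperm_inj _ _ _) (@tperm_inj _ _ _)
             (monomial_tperm _) (monomial_tperm _)).
have fact_neq0 : ((L`!)%:R : R) != 0 by rewrite pnatr_eq0 -lt0n fact_gt0.
rewrite !sumr_const card_Sn -mulrnA -[_ *+ (_ * _)]mulr_natl natrM -expr2.
by rewrite mulKf ?expf_neq0.
Qed.

End XorInstance.

Theorem mainTheorem7 (R : realType) (k d n m : nat)
  (hk : ~~ odd k) (hd : (0 < d)%N) (hm : (0 < m)%N)
  (S : 'I_m -> k.-tuple 'I_n) (hS : injective S)
  (eta : 'I_m -> R) (heta : forall a, eta a = 1 \/ eta a = -1)
  (x : 'I_n -> R) (hx : forall i, x i = 1 \/ x i = -1) :
  `| sat S eta x - 2^-1 | <=
    (2 * m%:R)^-1 *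
    (specnorm (@Rnorm R n m k S eta d) *
      (\sum_(I : ((k./2) * d).-tuple 'I_n) (histfact I)%:R)) `^ (d%:R^-1).
Proof.
have k_half : k = (k./2 + k./2)%N.
  by rewrite addnn -{1}(odd_double_half k) (negbTE hk).
pose hist (I : (k./2 * d).-tuple 'I_n) : R := (histfact I)%:R.
have hist_gt0 I : 0 < hist I.
  by rewrite ltr0n prodn_gt0 // => i; apply: fact_gt0.
pose w I := Num.sqrt (hist I) * monomial x I.
have qform_w : qform w (@Rnorm R n m k S eta d) = agreement S eta x ^+ d.
  rewrite -(qform_Sphid S eta x d k_half) -qform_perm_avg.
  by apply: qform_diag_scale => I; rewrite sqrtr_eq0 -ltNge hist_gt0.
have norm_w : \sum_I w I ^+ 2 = \sum_I hist I.
  apply: eq_bigr => I _.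
  by rewrite exprMn monomial_sqr // mulr1 sqr_sqrtr // ltW.
have := qform_le_specnorm (@Rnorm R n m k S eta d) w.
rewrite qform_w norm_w normrX => bound.
rewrite sat_bias // normrM ger0_norm ?invr_ge0 ?mulr_ge0 ?ler0n //.
by rewrite ler_pM2l ?invr_gt0 ?mulr_gt0 ?ltr0n // le_powR_inv.
Qed.
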